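(* Let $n\ge 3$ be an odd integer and $k\ge 3$ an integer. Then the metric dimension of $(C_n\square P_k)\square P_2$ is $3$, i.e. the minimum size of a resolving set of $(C_n\square P_k)\square P_2$ is $3$.
   Context: All graphs are finite and connected; $d(u,v)$ is the shortest-path distance. $C_n$ is the cycle on $n$ vertices and $P_k$ the path on $k$ vertices. The cartesian product $G\square H$ has vertex set $V(G)\times V(H)$, with $(g_1,h_1)$ adjacent to $(g_2,h_2)$ iff either $h_1=h_2$ and $g_1g_2\in E(G)$, or $g_1=g_2$ and $h_1h_2\in E(H)$. For an ordered set $Q=\{q_1,\dots,q_l\}$ of vertices, $r(x|Q)=(d(x,q_1),\dots,d(x,q_l))$. $Q$ is a resolving set of $G$ if any two distinct vertices of $G$ have distinct vectors $r(\cdot|Q)$; the metric dimension $\beta(G)$ is the minimum size of a resolving set. *)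

From mathcomp Require Import all_boot.
Set Implicit Arguments. Unset Strict Implicit. Unset Printing Implicit Defensive.

(* A graph is an (intended symmetric, irreflexive) edge relation on a finType. *)

(* In a connected graph on #|T| vertices this is always < #|T|, so the search
   range iota 0 #|T| suffices; a shortest walk is a shortest path. *)
Definition has_walk {T : finType} (e : rel T) (x y : T) (n : nat) : bool :=
  [exists p : n.-tuple T, path e x p && (last x p == y)].

Definition dist {T : finType} (e : rel T) (x y : T) : nat :=
  find (has_walk e x y) (iota 0 #|T|).

Definition connected_graph {T : finType} (e : rel T) : Prop :=
  forall x y : T, exists n, has_walk e x y n.

Definition cycle_rel (n : nat) : rel 'I_n :=
  fun i j => (j == (i.+1 %% n) :> nat) || (i == (j.+1 %% n) :> nat).

Definition path_rel (k : nat) : rel 'I_k :=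
  fun i j => (j == i.+1 :> nat) || (i == j.+1 :> nat).

Definition box_rel {A B : finType} (eA : rel A) (eB : rel B) : rel (A * B) :=
  fun u v => ((u.2 == v.2) && eA u.1 v.1) || ((u.1 == v.1) && eB u.2 v.2).

Definition resolving {T : finType} (e : rel T) (Q : {set T}) : Prop :=
  forall x y : T, (forall q, q \in Q -> dist e x q = dist e y q) -> x = y.

Definition metric_dim_eq {T : finType} (e : rel T) (b : nat) : Prop :=
  (exists Q : {set T}, resolving e Q /\ #|Q| = b) /\
  (forall Q : {set T}, resolving e Q -> b <= #|Q|).

Arguments cycle_rel n : clear implicits.
Arguments path_rel k : clear implicits.

From mathcomp Require Import all_boot ssrint zify.
Set Implicit Arguments. Unset Strict Implicit. Unset Printing Implicit Defensive.

(* Distances in C_n □ P_k □ P_2 are sums of the distances in the factors.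
   Upper bound: for n = 2m+1 the vertices (0,0) and (m,0) resolve C_n □ P_k
   by a parity argument, and adding the copy of (0,0) in the second layer
   separates the two layers.  Lower bound: every vertex a has at least 4
   neighbours, and their distances to any other vertex b take at most the
   3 values d(a,b) - 1, d(a,b), d(a,b) + 1, so no pair {a, b} resolves. *)

Definition dist_certificate {T : finType} (e : rel T) (D : T -> T -> nat) :=
  [/\ forall x, D x x = 0,
      forall x u v, e u v -> D x v <= (D x u).+1
    & forall x y, x != y -> exists2 z, e z y & (D x z).+1 = D x y].

Lemma find_iota_least (P : pred nat) N d :
  d < N -> P d -> (forall m, P m -> d <= m) -> find P (iota 0 N) = d.
Proof.
move=> ltdN Pd dmin; have -> : N = d + (N - d.+1).+1 by lia.
rewrite iotaD find_cat size_iota /= Pd addn0.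
by case: hasP => // -[m]; rewrite mem_iota => /andP[_ ltmd] /dmin; rewrite leqNgt ltmd.
Qed.

Section DistCertificate.
Variables (T : finType) (e : rel T) (D : T -> T -> nat).
Hypothesis cD : dist_certificate e D.

Lemma cert_eq0 x y : D x y = 0 -> x = y.
Proof. by case: cD => _ _ desc; case: (eqVneq x y) => // /desc[z _ <-]. Qed.

Lemma cert_edge x y : D x y = 1 -> e x y.
Proof.
case: cD => D0 _ desc Dxy1; case: (eqVneq x y) => [exy | /desc[z ezy]].
  by rewrite exy D0 in Dxy1.
by rewrite Dxy1 => -[/cert_eq0 ->].
Qed.

Lemma cert_path_le x u (p : seq T) : path e u p -> D x (last u p) <= D x u + size p.
Proof.
case: cD => _ Dlip _; elim: p u => [|z p IHp] u /=; first by rewrite addn0.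
move=> /andP[euz zp]; rewrite addnS -addSn (leq_trans (IHp _ zp)) //.
by rewrite leq_add2r Dlip.
Qed.

Lemma cert_walk_ge x y m : has_walk e x y m -> D x y <= m.
Proof.
case: cD => D0 _ _ /existsP[p /andP[xp /eqP <-]].
by have := cert_path_le x xp; rewrite D0 size_tuple.
Qed.

Lemma cert_has_walk x y : has_walk e x y (D x y).
Proof.
case: cD => D0 _ desc; move Dxy: (D x y) => d.
elim: d y Dxy => [|d IHd] y Dxy.
  by rewrite -(cert_eq0 Dxy); apply/existsP; exists [tuple]; rewrite /= eqxx.
have /desc[z ezy] : x != y by apply: contra_eqN Dxy => /eqP <-; rewrite D0.
rewrite Dxy => -[/IHd /existsP[p /andP[xp /eqP pz]]].
have size_p : size (rcons p y) == d.+1 by rewrite size_rcons size_tuple.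
apply/existsP; exists (Tuple size_p).
by rewrite /= rcons_path xp pz ezy last_rcons eqxx.
Qed.

(* Along a descent from y to x the values D x z run through 0, ..., D x y. *)
Lemma cert_lt_card x y : D x y < #|T|.
Proof.
case: cD => D0 _ desc.
have attained d z : D x z = d -> forall i, i <= d -> i \in map (D x) (enum T).
  elim: d z => [|d IHd] z Dxz i.
    by rewrite leqn0 => /eqP ->; apply/mapP; exists z; rewrite ?mem_enum.
  rewrite leq_eqVlt => /orP[/eqP -> | lt_id].
    by apply/mapP; exists z; rewrite ?mem_enum.
  have /desc[z' _] : x != z by apply: contra_eqN Dxz => /eqP <-; rewrite D0.
  by rewrite Dxz => -[/IHd]; apply.
have iota_sub : {subset iota 0 (D x y).+1 <= map (D x) (enum T)}.
  by move=> i; rewrite mem_iota add0n ltnS; apply: attained.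
by have := uniq_leq_size (iota_uniq 0 _) iota_sub; rewrite size_iota size_map -cardE.
Qed.

Lemma dist_certificateE x y : dist e x y = D x y.
Proof.
apply: find_iota_least; [exact: cert_lt_card | exact: cert_has_walk |].
exact: cert_walk_ge.
Qed.

Lemma cert_edge_sym x y : commutative D -> D x y = 1 -> e x y /\ e y x.
Proof. by move=> Dsym Dxy; rewrite !cert_edge // Dsym. Qed.

End DistCertificate.

Definition unit_sphere {T : finType} (D : T -> T -> nat) (a : T) : {set T} :=
  [set y | D a y == 1].

Lemma resolving_sub {T : finType} (e : rel T) (Q Q' : {set T}) :
  Q \subset Q' -> resolving e Q -> resolving e Q'.
Proof. by move=> /subsetP sQ resQ x y eqd; apply: resQ => q /sQ /eqd. Qed.

Section LowerBound.
Variables (T : finType) (e : rel T) (D : T -> T -> nat).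
Hypotheses (cD : dist_certificate e D) (Dsym : commutative D).

Lemma pair_not_resolving a b : 3 < #|unit_sphere D a| -> ~ resolving e [set a; b].
Proof.
set S := unit_sphere D a => S_gt3 resab.
have inj_Db : {in S &, injective (D b)}.
  move=> y z; rewrite !inE => /eqP Day /eqP Daz Dbyz; apply: resab => q.
  rewrite !inE !(dist_certificateE cD) (Dsym y) (Dsym z).
  by case/orP => /eqP ->; rewrite ?Day ?Daz.
have range_Db : {subset map (D b) (enum S) <= iota (D b a).-1 3}.
  move=> i /mapP[y]; rewrite mem_enum inE => /eqP /(cert_edge_sym cD Dsym)[eay eya] ->.
  case: cD => _ Dlip _; have := Dlip b _ _ eay; have := Dlip b _ _ eya.
  by rewrite mem_iota; lia.
have := uniq_leq_size _ range_Db; rewrite map_inj_in_uniq ?enum_uniq; last first.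
  by move=> y z; rewrite !mem_enum; apply: inj_Db.
by rewrite size_map size_iota -cardE => /(_ isT); lia.
Qed.

Lemma resolving_card_ge3 (x0 : T) Q :
  (forall a, 3 < #|unit_sphere D a|) -> resolving e Q -> 3 <= #|Q|.
Proof.
move=> S_gt3 resQ; rewrite leqNgt; apply/negP => lt_Q3.
have [a [b subQ]] : exists a b, Q \subset [set a; b].
  move: lt_Q3; rewrite !ltnS leq_eqVlt ltnS leq_eqVlt ltnS leqn0.
  case/or3P => [/cards2P[a [b [_ ->]]] | /cards1P[a ->] | /eqP/cards0_eq ->].
  - by exists a, b.
  - by exists a, a; rewrite setUid.
  - by exists x0, x0; apply: sub0set.
exact: pair_not_resolving (S_gt3 a) (resolving_sub subQ resQ).
Qed.

End LowerBound.

Definition box_dist {A B : Type} (DA : A -> A -> nat) (DB : B -> B -> nat)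
    (u v : A * B) : nat :=
  DA u.1 v.1 + DB u.2 v.2.

Lemma box_dist_sym (A B : Type) (DA : A -> A -> nat) (DB : B -> B -> nat) :
  commutative DA -> commutative DB -> commutative (box_dist DA DB).
Proof. by move=> DAsym DBsym u v; rewrite /box_dist DAsym DBsym. Qed.

Lemma box_dist_certificate (A B : finType) (eA : rel A) (eB : rel B) DA DB :
  dist_certificate eA DA -> dist_certificate eB DB ->
  dist_certificate (box_rel eA eB) (box_dist DA DB).
Proof.
case=> DA0 DAlip DAdesc [DB0 DBlip DBdesc]; split.
- by move=> x; rewrite /box_dist DA0 DB0.
- move=> x u v /orP[/andP[/eqP eq2 eA1] | /andP[/eqP eq1 eB2]]; rewrite /box_dist.
    by rewrite -eq2 -addSn leq_add2r DAlip.
  by rewrite -eq1 -addnS leq_add2l DBlip.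
- move=> [x1 x2] [y1 y2]; rewrite /box_dist /=.
  have [<- ne2 | /DAdesc[z ez <-] _] := eqVneq x1 y1.
    have [|z ez <-] := DBdesc x2 y2; first by apply: contra_neq ne2 => ->.
    by exists (x1, z); rewrite /box_rel /= ?eqxx ?ez ?orbT ?addnS.
  by exists (z, y2); rewrite /box_rel /= ?eqxx ?ez.
Qed.

Lemma dist_box (A B : finType) (eA : rel A) (eB : rel B) DA DB :
  dist_certificate eA DA -> dist_certificate eB DB ->
  forall u v, dist (box_rel eA eB) u v = DA u.1 v.1 + DB u.2 v.2.
Proof. by move=> cA cB u v; rewrite (dist_certificateE (box_dist_certificate cA cB)). Qed.

Lemma card_unit_sphere_box (A B : finType) (DA : A -> A -> nat) (DB : B -> B -> nat) a b :
  DA a a = 0 -> DB b b = 0 ->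
  #|unit_sphere DA a| + #|unit_sphere DB b| <= #|unit_sphere (box_dist DA DB) (a, b)|.
Proof.
move=> DAa DBb.
set SA := [set (x, b) | x in unit_sphere DA a].
set SB := [set (a, y) | y in unit_sphere DB b].
have /eqP SAB0 : SA :&: SB == set0.
  apply/eqP/setP => p; rewrite inE in_set0.
  apply/andP => -[/imsetP[x Sx ->] /imsetP[y _ [eq_xa _]]].
  by move: Sx; rewrite inE eq_xa DAa.
have inj_b : injective (fun x : A => (x, b)) by move=> x x' [].
have inj_a : injective (fun y : B => (a, y)) by move=> y y' [].
rewrite -(card_imset _ inj_b) -(card_imset _ inj_a).
rewrite -/SA -/SB (_ : _ + _ = #|SA :|: SB|); last by rewrite cardsU SAB0 cards0 subn0.
apply/subset_leq_card/subsetP => -[x y] /setUP[] /imsetP[z + [-> ->]].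
  by rewrite !inE /box_dist /= DBb addn0.
by rewrite !inE /box_dist /= DAa.
Qed.

Definition path_dist (k : nat) (i j : 'I_k) : nat := `|i - j|.

Definition cycle_dist (n : nat) (i j : 'I_n) : nat := minn `|i - j| (n - `|i - j|).

Lemma path_dist_sym k : commutative (@path_dist k).
Proof. by move=> i j; rewrite /path_dist distnC. Qed.

Lemma cycle_dist_sym n : commutative (@cycle_dist n).
Proof. by move=> i j; rewrite /cycle_dist distnC. Qed.

Lemma path_dist_certificate k : dist_certificate (path_rel k) (@path_dist k).
Proof.
rewrite /path_dist; split=> [x | x u v /orP[] /eqP -> | x y]; try lia.
move=> neq_xy; have : x != y :> nat by []; rewrite neq_ltn => /orP[lt_xy | lt_yx].
  have lt_pred_y : y.-1 < k by have := ltn_ord y; lia.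
  by exists (Ordinal lt_pred_y); rewrite /path_rel /=; lia.
have lt_succ_y : y.+1 < k by have := ltn_ord x; lia.
by exists (Ordinal lt_succ_y); rewrite /path_rel /=; lia.
Qed.

Lemma val_ordS n (i : 'I_n) : ordS i = (if i.+1 == n then 0 else i.+1) :> nat.
Proof.
case: i => i lt_in /=; case: eqP => [-> | ne_Sin]; first exact: modnn.
by rewrite modn_small //; lia.
Qed.

Lemma val_ord_pred n (i : 'I_n) : ord_pred i = (if i == 0 :> nat then n.-1 else i.-1) :> nat.
Proof.
case: i => [[|i] lt_in] /=; first by rewrite add0n modn_small //; lia.
by rewrite modnDr modn_small // ltnW.
Qed.

Lemma cycle_relE n (i j : 'I_n) : cycle_rel n i j = (j == ordS i) || (i == ordS j).
Proof. by []. Qed.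

Lemma cycle_dist_certificate n : dist_certificate (cycle_rel n) (@cycle_dist n).
Proof.
split=> [x | x u v | x y]; first by rewrite /cycle_dist; lia.
  rewrite cycle_relE => /orP[] /eqP ->; rewrite /cycle_dist ?val_ordS;
  by case: ifP; have := ltn_ord x; have := ltn_ord u; have := ltn_ord v; lia.
move=> neq_xy; have ne_xy : x != y :> nat by [].
have lt_xn := ltn_ord x; have lt_yn := ltn_ord y.
have [Sy_closer | pred_y_closer] :
    (cycle_dist x (ordS y)).+1 = cycle_dist x y \/
    (cycle_dist x (ord_pred y)).+1 = cycle_dist x y.
  rewrite /cycle_dist val_ordS val_ord_pred; do 2 case: eqP; lia.
  by exists (ordS y); rewrite // cycle_relE eqxx orbT.
by exists (ord_pred y); rewrite // cycle_relE ord_predK eqxx.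
Qed.

Lemma card_unit_sphere_path k (j : 'I_k) : 1 < k -> 0 < #|unit_sphere (@path_dist k) j|.
Proof.
move=> k_gt1; apply/card_gt0P; have lt_jk := ltn_ord j.
have lt_nb : (if j.+1 < k then j.+1 else j.-1) < k by case: ifP; lia.
by exists (Ordinal lt_nb); rewrite inE /path_dist /=; case: ifP; lia.
Qed.

Lemma card_unit_sphere_cycle n (i : 'I_n) : 3 <= n -> 2 <= #|unit_sphere (@cycle_dist n) i|.
Proof.
move=> n_ge3; have lt_in := ltn_ord i.
have sub_S : [set ordS i; ord_pred i] \subset unit_sphere (@cycle_dist n) i.
  apply/subsetP => j; rewrite !inE => /orP[] /eqP ->;
  by rewrite /cycle_dist ?val_ordS ?val_ord_pred; case: ifP; lia.
rewrite (leq_trans _ (subset_leq_card sub_S)) // cards2 ltnS lt0b.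
by apply/eqP => /(congr1 (@nat_of_ord n)); rewrite val_ordS val_ord_pred; do 2 case: eqP; lia.
Qed.

Lemma resolving_box_P2 (T : finType) (e : rel T) (D : T -> T -> nat) (Q : {set T}) q :
  dist_certificate e D -> q \in Q -> resolving e Q ->
  exists Q2, resolving (box_rel e (path_rel 2)) Q2 /\ #|Q2| = #|Q|.+1.
Proof.
move=> cD Qq resQ; exists ((q, ord_max) |: [set (x, ord0) | x in Q]); split.
  move=> [x l] [y l'] eq_dist.
  have distE := dist_box cD (path_dist_certificate 2).
  have eq0 z : z \in Q -> D x z + l = D y z + l'.
    move=> Qz; suff : D x z + path_dist l ord0 = D y z + path_dist l' ord0.
      by rewrite /path_dist /=; lia.
    by have := eq_dist (z, ord0); rewrite !distE; apply; rewrite !inE imset_f ?orbT.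
  have eq1 : D x q + `|l - 1| = D y q + `|l' - 1|.
    by have := eq_dist (q, ord_max); rewrite !distE; apply; rewrite !inE eqxx.
  have eq_l : l = l'.
    by apply: ord_inj; have := eq0 q Qq; have := ltn_ord l; have := ltn_ord l'; lia.
  rewrite -eq_l in eq0 *; congr pair; apply: resQ => z /eq0 /addIn.
  by rewrite !(dist_certificateE cD).
rewrite cardsU1 card_imset; last by move=> x x' [].
by case: imsetP => // -[x _ /(congr1 (fun p => val p.2))].
Qed.

(* For n = 2m+1, the difference of the distances from x to 0 and to m is
   2x - m on the arc 0..m and 3m + 1 - 2x on the other arc: these have
   opposite parities, so it determines x. *)
Lemma cycle_path_resolving n k (o m : 'I_n) (o' : 'I_k) :
  o = 0 :> nat -> n = m.*2.+1 -> o' = 0 :> nat ->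
  resolving (box_rel (cycle_rel n) (path_rel k)) [set (o, o'); (m, o')].
Proof.
move=> o0 n_odd o'0 [x j] [y j'] eq_dist.
have distE := dist_box (cycle_dist_certificate n) (path_dist_certificate k).
have := eq_dist (o, o'); have := eq_dist (m, o').
rewrite !distE !inE !eqxx ?orbT /cycle_dist /path_dist /= o0 o'0 !distn0.
move=> /(_ isT) eq_m /(_ isT) eq_o.
have lt_xn := ltn_ord x; have lt_yn := ltn_ord y.
have [eq_xy eq_jj'] : x = y :> nat /\ j = j' :> nat by lia.
by rewrite (val_inj eq_xy) (val_inj eq_jj').
Qed.

Lemma card_unit_sphere_cycle_path_P2 n k a :
  3 <= n -> 1 < k ->
  3 < #|unit_sphere (box_dist (box_dist (@cycle_dist n) (@path_dist k)) (@path_dist 2)) a|.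
Proof.
move=> n_ge3 k_gt1; case: a => [[i j] l].
have Di0 : cycle_dist i i = 0 by case: (cycle_dist_certificate n) => ->.
have Dj0 : path_dist j j = 0 by case: (path_dist_certificate k) => ->.
have Dl0 : path_dist l l = 0 by case: (path_dist_certificate 2) => ->.
have Dij0 : box_dist (@cycle_dist n) (@path_dist k) (i, j) (i, j) = 0.
  by rewrite /box_dist Di0 Dj0.
apply: leq_trans (card_unit_sphere_box Dij0 Dl0).
apply: (@leq_add 3 1); last exact: card_unit_sphere_path.
apply: leq_trans (card_unit_sphere_box Di0 Dj0).
exact: leq_add (card_unit_sphere_cycle i n_ge3) (card_unit_sphere_path j k_gt1).
Qed.

Theorem theorem3p2 (n k : nat) (hn : 3 <= n) (hodd : odd n) (hk : 3 <= k) :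
  metric_dim_eq (box_rel (box_rel (cycle_rel n) (path_rel k)) (path_rel 2)) 3.
Proof.
have cD := box_dist_certificate (cycle_dist_certificate n) (path_dist_certificate k).
have lt0n : 0 < n by lia.
have lt0k : 0 < k by lia.
split.
  have lt_half : n./2 < n by rewrite -divn2 ltn_Pdiv.
  have n_odd : n = (Ordinal lt_half).*2.+1.
    by have := odd_double_half n; rewrite hodd /=; lia.
  have resQ := cycle_path_resolving (o := Ordinal lt0n) (o' := Ordinal lt0k) erefl n_odd erefl.
  have [Q2 [resQ2 cardQ2]] := resolving_box_P2 cD (setU11 _ _) resQ.
  exists Q2; split => //; rewrite cardQ2 cards2; case: eqP => // -[]; lia.
move=> Q; apply: (resolving_card_ge3 (box_dist_certificate cD (path_dist_certificate 2))).
- exact: box_dist_sym (box_dist_sym (@cycle_dist_sym n) (@path_dist_sym k)) (@path_dist_sym 2).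
- exact: ((Ordinal lt0n, Ordinal lt0k), ord0).
- by move=> a; apply: card_unit_sphere_cycle_path_P2; lia.
Qed.
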